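(* For every $n\in\mathbb N$, there exist infinitely many natural numbers that are antipalindromic in at least $n$ distinct integer bases $b\ge 2$.
   Context: For an integer $b\ge 2$, every natural number $x$ has a unique base-$b$ expansion $x=a_\ell b^\ell+\dots+a_1b+a_0$ with $a_0,\dots,a_\ell\in\{0,1,\dots,b-1\}$ and $a_\ell\neq 0$. The number $x$ is antipalindromic in base $b$ if $a_j=b-1-a_{\ell-j}$ for all $j\in\{0,1,\dots,\ell\}$. *)

From mathcomp Require Import all_boot.
Set Implicit Arguments. Unset Strict Implicit. Unset Printing Implicit Defensive.

(* Little-endian base-b digit list [a_0; a_1; ...; a_l] of x, computed with
   fuel; with fuel >= x and b >= 2 it is the full expansion (a_l <> 0),
   and digits b 0 = [::]. *)
Fixpoint digits_aux (fuel b x : nat) : seq nat :=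
  match fuel with
  | 0 => [::]
  | fuel'.+1 => if x == 0 then [::] else (x %% b) :: digits_aux fuel' b (x %/ b)
  end.

Definition digits (b x : nat) : seq nat := digits_aux x b x.

Definition antipalindromic (b x : nat) : Prop :=
  0 < x /\
  let ds := digits b x in
  forall j, j < size ds -> nth 0 ds j = b - 1 - nth 0 ds (size ds - 1 - j).

From mathcomp Require Import all_boot zify.

(* If [1 < c < b] then [c * (b - 1) = (c - 1) * b + (b - c)] has exactly the
   two base-b digits [b - c] and [c - 1], which sum to [b - 1]; so it is
   antipalindromic in base [b].  Hence [x] is antipalindromic in base
   [x / c + 1] for every divisor [c] of [x] with [1 < c <= x / c].
   A large multiple of [(n + 1)!] has the [n] divisors [2, ..., n + 1] of this
   kind, and distinct divisors give distinct bases. *)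

Lemma digits_two b a0 a1 :
  0 < a1 < b -> a0 < b -> digits b (a1 * b + a0) = [:: a0; a1].
Proof.
move=> /andP[a1_gt0 a1_ltb] a0_ltb.
have mod_x : (a1 * b + a0) %% b = a0 by rewrite modnMDl modn_small.
have div_x : (a1 * b + a0) %/ b = a1.
  by rewrite divnMDl ?divn_small ?addn0 //; lia.
have x_ge2 : 1 < a1 * b + a0 by nia.
rewrite /digits; case: (a1 * b + a0) x_ge2 mod_x div_x => [|[|fuel]] //= _ mod_x div_x.
rewrite mod_x div_x; have -> : (a1 == 0) = false by lia.
case: fuel mod_x div_x => [|fuel] /= mod_x div_x; first by rewrite modn_small.
by rewrite modn_small // divn_small.
Qed.

Lemma antipalindromic_mul_pred b c : 1 < c < b -> antipalindromic b (c * b.-1).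
Proof.
move=> /andP[c_gt1 c_ltb]; split; first by nia.
have split_x : c * b.-1 = c.-1 * b + (b - c) by nia.
rewrite split_x digits_two; try lia.
by move=> /= [|[|j]] //= _; lia.
Qed.

Lemma antipalindromic_codivisor_base x c :
  1 < c -> c %| x -> c <= x %/ c -> antipalindromic (x %/ c).+1 x.
Proof.
move=> c_gt1 c_dvd_x c_le_q.
by rewrite -{2}(divnK c_dvd_x) mulnC; apply: antipalindromic_mul_pred; lia.
Qed.

Lemma divn_codivisor x c : 0 < x -> c %| x -> x %/ (x %/ c) = c.
Proof. by move=> x_gt0 c_dvd_x; rewrite divnA // mulKn. Qed.

Theorem mainTheorem14 :
  forall n : nat, forall N : nat, exists x : nat, N < x /\
    exists bs : seq nat, uniq bs /\ n <= size bs /\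
      forall b, b \in bs -> 2 <= b /\ antipalindromic b x.
Proof.
move=> n N.
pose K := (N + n).+2; pose x := K * n.+1`!.
have fact_pos := fact_gt0 n.+1.
have x_gt0 : 0 < x by rewrite muln_gt0.
have divisor c : c \in iota 2 n -> [/\ 1 < c, c %| x & c <= x %/ c].
  rewrite mem_iota => /andP[c_gt1 c_lt].
  have c_dvd : c %| n.+1`! by apply: dvdn_fact; lia.
  split=> //; first exact: dvdn_mull.
  rewrite leq_divRL ?(ltnW c_gt1) // /x; apply: leq_mul; [lia | exact: dvdn_leq].
exists x; split; first by rewrite /x /K; nia.
exists [seq (x %/ c).+1 | c <- iota 2 n]; split; [|split].
- rewrite map_inj_in_uniq ?iota_uniq // => c c' /divisor[_ c_dvd _].
  move=> /divisor[_ c'_dvd _] [eq_q].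
  by rewrite -(@divn_codivisor x c x_gt0 c_dvd) eq_q divn_codivisor.
- by rewrite size_map size_iota.
move=> _ /mapP[c /divisor[c_gt1 c_dvd c_le_q] ->].
by split; [lia | apply: antipalindromic_codivisor_base].
Qed.
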